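(* Let $PS = D \cup LP \cup MP \cup IC$ be a maximal P2P system such that no negation occurs in $LP$. Then the relation $\sqsupseteq_{Max}$ is a partial order on the set of weak models of $PS$.
   Context: Peer atoms: a peer identifier is a positive integer; a peer atom is $i\!:\!p(t_1,\dots,t_k)$ with $i$ a peer identifier, $p$ a predicate and $t_j$ terms; $i\!:\!p$ is a peer predicate. A literal is an atom $A$ or its negation-as-failure $not\ A$. Built-in atoms are $X\,\theta\,Y$ with $\theta\in\{<,>,\le,\ge,=,\neq\}$. Rules (all safe): a standard rule $H\leftarrow \mathcal B$ with $H$ a peer atom and $\mathcal B$ a conjunction of peer literals and built-ins; an integrity constraint $\leftarrow \mathcal B$; a maximal mapping rule $i\!:\!h(X) \leftharpoonup j\!:\!(p_1(X_1),\dots,p_m(X_m),\varphi)$ with $i\neq j$; a minimal mapping rule, identical but written with $\leftharpoondown$. A peer $P_i=\langle D_i,LP_i,MP_i,IC_i\rangle$ consists of a finite set $D_i$ of ground atoms with identifier $i$, a finite set $LP_i$ of standard rules all of whose atoms have identifier $i$, a finite set $MP_i$ of mapping rules with head identifier $i$, and a finite set $IC_i$ of integrity constraints over atoms with identifier $i$. A P2P system is a set $PS=\{P_1,\dots,P_n\}$ of peers in which every source identifier of a mapping rule lies in $[1..n]$; $D,LP,MP,IC$ are the unions of the components, and $PS$ is identified with $D\cup LP\cup MP\cup IC$. A maximal P2P system is one all of whose mapping rules are maximal. A predicate is derived if it heads a standard rule, a mapping predicate if it heads a mapping rule, base otherwise; each predicate has exactly one type and each mapping predicate heads exactly one mapping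 rule. Semantics: an interpretation is a set of ground peer atoms; $A$ true iff $A\in M$, $not\ A$ true iff $A\notin M$; a standard rule is satisfied iff its body is false or its head true; a constraint iff its body is false. $MM(\Pi)$ is the set of inclusion-minimal models of a program $\Pi$ (models satisfy all ground instances). $St(r)$ turns a mapping rule with head $H$ and body $\mathcal B$ into $H\leftarrow\mathcal B$. An interpretation $M$ is a weak model of $PS$ if $\{M\}=MM(St(PS^M))$, where $PS^M$ is obtained from $ground(PS)$ by removing every rule whose body contains $not\ A$ with $A\in M$, deleting negative literals from the remaining rules, and removing every ground mapping rule whose head is not in $M$. $M[MP]$ denotes the set of atoms of $M$ whose predicate is a mapping predicate. For weak models $M,N$: $M\sqsupseteq_{Max}N$ iff $M[MP]\supseteq N[MP]$. *)

From Stdlib Require Import List Arith.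
Import ListNotations.

(* Constants are natural numbers (so that built-ins <,>,<=,>= make sense);
   variables are indexed by natural numbers. *)
Inductive term := TC (c : nat) | TV (v : nat).

Record atom := mkAtom { a_id : nat; a_pred : nat; a_args : list term }.

Inductive cmp := CLt | CGt | CLe | CGe | CEq | CNe.
Record builtin := mkBI { b_op : cmp; b_l : term; b_r : term }.

Inductive literal := LPos (a : atom) | LNot (a : atom) | LBi (b : builtin).

Record std_rule := mkStd { sr_head : atom; sr_body : list literal }.
Definition constraint := list literal.

Inductive map_kind := MaxMap | MinMap.
(* mapping rule  i:h(X) <-(max/min) j:(p_1(X_1),...,p_m(X_m), phi) *)
Record map_rule := mkMap {
  mr_kind : map_kind; mr_head : atom; mr_src : nat;
  mr_body : list atom; mr_phi : list builtin }.

Record peer := mkPeer {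
  pD : list atom; pLP : list std_rule; pMP : list map_rule; pIC : list constraint }.

(* A P2P system {P_1,...,P_n}: the peer with identifier i is the (i-1)-th
   element of the list. *)
Definition p2p := list peer.

Definition allD (PS : p2p) := flat_map pD PS.
Definition allLP (PS : p2p) := flat_map pLP PS.
Definition allMP (PS : p2p) := flat_map pMP PS.
Definition allIC (PS : p2p) := flat_map pIC PS.

Definition is_var (t : term) := exists v, t = TV v.
Definition is_const (t : term) := exists c, t = TC c.
Definition ground_atom (a : atom) := forall t, In t (a_args a) -> is_const t.

Definition lit_atom_id_ok (i : nat) (l : literal) : Prop :=
  match l with LPos a | LNot a => a_id a = i | LBi _ => True end.

Definition wf_peer (n i : nat) (P : peer) : Prop :=
  (forall a, In a (pD P) -> a_id a = i /\ ground_atom a) /\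
  (forall r, In r (pLP P) ->
     a_id (sr_head r) = i /\ forall l, In l (sr_body r) -> lit_atom_id_ok i l) /\
  (forall r, In r (pMP P) ->
     a_id (mr_head r) = i /\ 1 <= mr_src r <= n /\ mr_src r <> i /\
     (forall t, In t (a_args (mr_head r)) -> is_var t) /\
     (forall a, In a (mr_body r) ->
        a_id a = mr_src r /\ forall t, In t (a_args a) -> is_var t)) /\
  (forall c, In c (pIC P) -> forall l, In l c -> lit_atom_id_ok i l).

Definition var_in_term (v : nat) (t : term) := t = TV v.
Definition var_in_atom (v : nat) (a : atom) := In (TV v) (a_args a).
Definition var_in_bi (v : nat) (b : builtin) := b_l b = TV v \/ b_r b = TV v.
Definition var_in_lit (v : nat) (l : literal) :=
  match l with LPos a | LNot a => var_in_atom v a | LBi b => var_in_bi v b end.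
Definition var_in_pos_body (v : nat) (B : list literal) :=
  exists a, In (LPos a) B /\ var_in_atom v a.

Definition safe_std (r : std_rule) :=
  forall v, (var_in_atom v (sr_head r) \/ exists l, In l (sr_body r) /\ var_in_lit v l) ->
    var_in_pos_body v (sr_body r).
Definition safe_ic (c : constraint) :=
  forall v, (exists l, In l c /\ var_in_lit v l) -> var_in_pos_body v c.
Definition safe_map (r : map_rule) :=
  forall v, (var_in_atom v (mr_head r) \/ exists b, In b (mr_phi r) /\ var_in_bi v b) ->
    exists a, In a (mr_body r) /\ var_in_atom v a.

Definition pkey (a : atom) : nat * nat := (a_id a, a_pred a).
Definition derived_pred (PS : p2p) (q : nat * nat) :=
  exists r, In r (allLP PS) /\ pkey (sr_head r) = q.
Definition mapping_pred (PS : p2p) (q : nat * nat) :=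
  exists r, In r (allMP PS) /\ pkey (mr_head r) = q.

Definition wf_p2p (PS : p2p) : Prop :=
  (forall k P, nth_error PS k = Some P -> wf_peer (length PS) (S k) P) /\
  (forall r, In r (allLP PS) -> safe_std r) /\
  (forall c, In c (allIC PS) -> safe_ic c) /\
  (forall r, In r (allMP PS) -> safe_map r) /\
  (forall q, ~ (derived_pred PS q /\ mapping_pred PS q)) /\
  (forall r1 r2, In r1 (allMP PS) -> In r2 (allMP PS) ->
     pkey (mr_head r1) = pkey (mr_head r2) -> r1 = r2).

Definition maximal_p2p (PS : p2p) :=
  forall r, In r (allMP PS) -> mr_kind r = MaxMap.

Definition LP_negation_free (PS : p2p) :=
  forall r a, In r (allLP PS) -> ~ In (LNot a) (sr_body r).

Record gatom := mkG { g_id : nat; g_pred : nat; g_args : list nat }.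
Definition interp := gatom -> Prop.

Definition subst := nat -> nat.
Definition tsub (s : subst) (t : term) : nat :=
  match t with TC c => c | TV v => s v end.
Definition gnd (s : subst) (a : atom) : gatom :=
  mkG (a_id a) (a_pred a) (map (tsub s) (a_args a)).

Definition cmp_eval (o : cmp) (x y : nat) : Prop :=
  match o with
  | CLt => x < y | CGt => y < x | CLe => x <= y | CGe => y <= x
  | CEq => x = y | CNe => x <> y end.
Definition bi_eval (s : subst) (b : builtin) : Prop :=
  cmp_eval (b_op b) (tsub s (b_l b)) (tsub s (b_r b)).

(* Ground instance (under s) of a body belongs to the reduct PS^M
   (no "not A" with A in M) and the reduced body (negations deleted)
   is true in N. *)
Definition reduct_body_true (M N : interp) (s : subst) (B : list literal) : Prop :=
  forall l, In l B ->
    match l with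
    | LPos a => N (gnd s a)
    | LNot a => ~ M (gnd s a)
    | LBi b => bi_eval s b
    end.

(* N is a model of St(PS^M) (ground(PS) = all instances under all
   substitutions of variables by constants). *)
Definition model_St_reduct (PS : p2p) (M N : interp) : Prop :=
  (forall a s, In a (allD PS) -> N (gnd s a)) /\
  (forall r s, In r (allLP PS) -> reduct_body_true M N s (sr_body r) ->
     N (gnd s (sr_head r))) /\
  (forall c s, In c (allIC PS) -> ~ reduct_body_true M N s c) /\
  (forall r s, In r (allMP PS) ->
     M (gnd s (mr_head r)) ->   (* ground mapping rule kept only if head in M *)
     (forall a, In a (mr_body r) -> N (gnd s a)) ->
     (forall b, In b (mr_phi r) -> bi_eval s b) ->
     N (gnd s (mr_head r))).

Definition minimal_model_St_reduct (PS : p2p) (M N : interp) : Prop :=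
  model_St_reduct PS M N /\
  forall N', model_St_reduct PS M N' -> (forall x, N' x -> N x) ->
    forall x, N x -> N' x.

Definition weak_model (PS : p2p) (M : interp) : Prop :=
  minimal_model_St_reduct PS M M /\
  forall N, minimal_model_St_reduct PS M N -> N = M.

Definition restr_MP (PS : p2p) (M : interp) : interp :=
  fun x => M x /\ mapping_pred PS (g_id x, g_pred x).

Definition geMax (PS : p2p) (M N : interp) : Prop :=
  forall x, restr_MP PS N x -> restr_MP PS M x.

Definition partial_order_on {T : Type} (S : T -> Prop) (R : T -> T -> Prop) : Prop :=
  (forall x, S x -> R x x) /\
  (forall x y z, S x -> S y -> S z -> R x y -> R y z -> R x z) /\
  (forall x y, S x -> S y -> R x y -> R y x -> x = y).

(* Reflexivity and transitivity of ⊒_Max are those of inclusion of the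
   mapping parts M[MP].  For antisymmetry, suppose M[MP] ⊆ N[MP] for weak
   models M and N.  Then M ∩ N is still a model of St(PS^M): facts and
   integrity constraints are preserved by shrinking the interpretation,
   negation-free standard rules hold in both M and N, and a ground mapping
   rule survives in PS^M only if its head lies in M[MP] ⊆ N.  Minimality of
   M gives M ⊆ N, and symmetrically N ⊆ M. *)

From Stdlib Require Import List FunctionalExtensionality PropExtensionality.

Lemma reduct_body_true_mono (M N N' : interp) (s : subst) (B : list literal) :
  (forall x, N x -> N' x) ->
  reduct_body_true M N s B -> reduct_body_true M N' s B.
Proof.
  intros HNN' HB l Hl; specialize (HB l Hl).
  destruct l; auto.
Qed.

Lemma reduct_body_true_negfree (M M' N : interp) (s : subst) (B : list literal) :
  (forall a, ~ In (LNot a) B) ->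
  reduct_body_true M N s B -> reduct_body_true M' N s B.
Proof.
  intros Hneg HB l Hl; specialize (HB l Hl).
  destruct l as [a | a | b]; auto.
  exfalso; exact (Hneg a Hl).
Qed.

Lemma model_St_reduct_inter (PS : p2p) (M N : interp) :
  LP_negation_free PS ->
  model_St_reduct PS M M -> model_St_reduct PS N N ->
  (forall x, restr_MP PS M x -> restr_MP PS N x) ->
  model_St_reduct PS M (fun x => M x /\ N x).
Proof.
  intros Hneg [MD [MLP [MIC MMP]]] [ND [NLP [NIC NMP]]] HMP.
  assert (HinM : forall x, M x /\ N x -> M x) by (intros x Hx; apply Hx).
  assert (HinN : forall x, M x /\ N x -> N x) by (intros x Hx; apply Hx).
  split; [| split; [| split]].
  - intros a s Ha; split; auto.
  - intros r s Hr HB; split.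
    + apply MLP; auto.
      exact (reduct_body_true_mono _ _ _ _ _ HinM HB).
    + apply NLP; auto.
      apply (reduct_body_true_negfree M); [intro a; exact (Hneg r a Hr) |].
      exact (reduct_body_true_mono _ _ _ _ _ HinN HB).
  - intros c s Hc HB.
    exact (MIC c s Hc (reduct_body_true_mono _ _ _ _ _ HinM HB)).
  - intros r s Hr Hhead _ _; split; auto.
    apply HMP; split; [exact Hhead |].
    exists r; split; auto.
Qed.

Lemma weak_model_incl (PS : p2p) (M N : interp) :
  LP_negation_free PS -> weak_model PS M -> weak_model PS N ->
  geMax PS N M -> forall x, M x -> N x.
Proof.
  intros Hneg HM HN HMP x Hx.
  assert (Hinter : model_St_reduct PS M (fun y => M y /\ N y)).
  { apply model_St_reduct_inter; auto.
    - exact (proj1 (proj1 HM)).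
    - exact (proj1 (proj1 HN)). }
  destruct HM as [[_ HMmin] _].
  exact (proj2 (HMmin _ Hinter (fun y Hy => proj1 Hy) x Hx)).
Qed.

Lemma interp_ext (M N : interp) : (forall x, M x <-> N x) -> M = N.
Proof.
  intros HMN; apply functional_extensionality; intro x.
  apply propositional_extensionality, HMN.
Qed.

Theorem proposition2 (PS : p2p) :
  wf_p2p PS -> maximal_p2p PS -> LP_negation_free PS ->
  partial_order_on (weak_model PS) (geMax PS).
Proof.
  intros _ _ Hneg; split; [| split].
  - intros M _ x Hx; exact Hx.
  - intros M N P _ _ _ HMN HNP x Hx; auto.
  - intros M N HM HN HMN HNM.
    apply interp_ext; intro x; split.
    + exact (weak_model_incl PS M N Hneg HM HN HNM x).
    + exact (weak_model_incl PS N M Hneg HN HM HMN x).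
Qed.
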